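(* Let $n\ge 3$, $k\ge 1$ and $p\in\{0,1,2\}$. Then \[ \Gamma_{\rm S}(C_n,C_{3k+p})= \begin{cases} kn, & p=0,\\ kn+\lceil n/3\rceil, & p=1,\\ (k+1)n, & p=2. \end{cases} \]
   Context: $C_m$ denotes the cycle on $m$ vertices; $\gamma$ denotes the domination number. For graphs $G,H$ and a function $f\colon V(G)\to V(H)$, the Sierpiński product $G\otimes_f H$ is the graph with vertex set $V(G)\times V(H)$ and edges of two types: (type 1) $(g,h)(g,h')$ for every $g\in V(G)$ and every edge $hh'\in E(H)$; (type 2) $(g,f(g'))(g',f(g))$ for every edge $gg'\in E(G)$. The upper Sierpiński domination number is $\Gamma_{\rm S}(G,H)=\max_{f}\gamma(G\otimes_f H)$ over all functions $f\colon V(G)\to V(H)$. *)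

From mathcomp Require Import all_boot.
Set Implicit Arguments. Unset Strict Implicit. Unset Printing Implicit Defensive.

(* Simple graphs are symmetric irreflexive relations on a finType. *)

(* The cycle C_m on vertex set 'I_m = {0,...,m-1}: i ~ j iff j = i+1 mod m
   or i = j+1 mod m (a simple cycle whenever m >= 3). *)
Definition cycle_rel (m : nat) : rel 'I_m :=
  fun i j => (val j == (val i).+1 %% m) || (val i == (val j).+1 %% m).

Arguments cycle_rel : clear implicits.

Definition sierp_rel (G H : finType) (eG : rel G) (eH : rel H) (f : G -> H)
  : rel (G * H) :=
  fun x y =>
    ((x.1 == y.1) && eH x.2 y.2)
    || [&& eG x.1 y.1, x.2 == f y.1 & y.2 == f x.1].

Definition dominating (T : finType) (e : rel T) (D : {set T}) : bool :=
  [forall x, (x \in D) || [exists y in D, e x y]].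

Definition domination_number (T : finType) (e : rel T) : nat :=
  \big[minn/#|T|]_(D : {set T} | dominating e D) #|D|.

Definition upper_sierp_dom (G H : finType) (eG : rel G) (eH : rel H) : nat :=
  \max_(f : {ffun G -> H}) domination_number (sierp_rel eG eH f).

From mathcomp Require Import all_boot all_order zify.
Import Order.TTheory.
Set Implicit Arguments. Unset Strict Implicit. Unset Printing Implicit Defensive.

(* Upper bound, for any f: in the layer of g take the k vertices z + 2, z + 5, ...,
   z + 3k - 1 after z = f g; they dominate all of C_(3k+p) except z when p = 1
   and except z, z - 1 when p = 2.  For p = 2 add z.  For p = 1 choose
   ceil(n/3) centres in C_n; a centre's layer gets k + 1 vertices dominating it
   and containing the values of f at both neighbours, while a non-centre g with
   adjacent centre g' takes z = f g', so its missed vertex (g, f g') is joined by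
   a bridge edge to (g', f g).  Lower bound, for a constant map f = c: bridge
   edges only join copies of c, so every layer alone dominates C_m minus c and
   has at least ceil((m - 1)/3) vertices.  When m = 3k + 1, a layer of size k
   misses (g, c), which then needs a neighbouring layer of size k + 1; these
   heavy layers dominate C_n. *)

Section Domination.
Variables (T : finType) (e : rel T).

Definition closed_nbh (S : {set T}) : {set T} :=
  [set x | (x \in S) || [exists y in S, e x y]].

Lemma mem_closed_nbh (S : {set T}) x y :
  y \in S -> (x == y) || e x y -> x \in closed_nbh S.
Proof.
move=> yS /orP [/eqP -> | exy]; rewrite inE ?yS //.
by apply/orP; right; apply/existsP; exists y; rewrite yS.
Qed.

Lemma closed_nbhS (S S' : {set T}) : S \subset S' -> closed_nbh S \subset closed_nbh S'.
Proof.
move=> /subsetP sSS'; apply/subsetP => x; rewrite !inE => /orP [/sSS' -> //|].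
by case/existsP => y /andP [/sSS' yS' exy]; apply/orP; right; apply/existsP; exists y; rewrite yS'.
Qed.

Lemma dominatingP (D : {set T}) : reflect (forall x, x \in closed_nbh D) (dominating e D).
Proof.
apply: (iffP forallP) => domD x; first by rewrite inE domD.
by have := domD x; rewrite inE.
Qed.

Lemma domination_number_min (D : {set T}) : dominating e D -> domination_number e <= #|D|.
Proof. by move=> domD; rewrite /domination_number -minEnat -leEnat; exact: bigmin_le_cond. Qed.

Lemma domination_number_max t :
  (forall D, dominating e D -> t <= #|D|) -> t <= domination_number e.
Proof.
move=> tD; rewrite /domination_number -minEnat -leEnat.
apply/bigmin_geP; split=> [|D /tD //]; rewrite leEnat -cardsT; apply: tD.
by apply/dominatingP => x; apply: (mem_closed_nbh (y := x)); rewrite ?in_setT ?eqxx.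
Qed.

End Domination.

Section SierpinskiLayers.
Variables (G H : finType) (eG : rel G) (eH : rel H).

Definition layer (D : {set G * H}) (g : G) : {set H} := [set h | (g, h) \in D].

Lemma card_layers (D : {set G * H}) : #|D| = \sum_g #|layer D g|.
Proof.
under eq_bigr do rewrite -sum1_card.
by rewrite pair_big_dep -sum1_card; apply: eq_bigl => -[g h]; rewrite inE.
Qed.

Lemma dominating_sierpP (f : G -> H) (D : {set G * H}) :
  reflect (forall g h, h \in closed_nbh eH (layer D g)
             \/ exists g', [/\ eG g g', h = f g' & f g \in layer D g'])
          (dominating (sierp_rel eG eH f) D).
Proof.
apply: (iffP forallP) => [domD g h | domD [g h]].
  case/orP: (domD (g, h)) => [gh | /existsP [[g' h'] /andP [g'h' /=]]].
    by left; rewrite !inE gh.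
  rewrite /sierp_rel /= => /orP [/andP [/eqP gg' ehh'] | /and3P [egg' /eqP -> /eqP h'fg]].
    by left; apply: (mem_closed_nbh (y := h')); rewrite ?inE ?gg' ?g'h' ?ehh' ?orbT.
  by right; exists g'; rewrite inE -h'fg.
case: (domD g h) => [| [g' [egg' -> fg]]].
  rewrite inE => /orP [gh | /existsP [h' /andP [h'D ehh']]]; first by rewrite inE in gh; rewrite gh.
  rewrite inE in h'D.
  by apply/orP; right; apply/existsP; exists (g, h'); rewrite h'D /sierp_rel /= eqxx ehh'.
apply/orP; right; apply/existsP; exists (g', f g); rewrite inE in fg.
by rewrite fg /sierp_rel /= egg' !eqxx orbT.
Qed.

Lemma dominating_sierp_layer (f : G -> H) (D : {set G * H}) g h :
  dominating (sierp_rel eG eH f) D -> (forall g', h != f g') ->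
  h \in closed_nbh eH (layer D g).
Proof.
move=> /dominating_sierpP/(_ g h) [// | [g' [_ hfg' _]]] /(_ g').
by rewrite hfg' eqxx.
Qed.

Lemma domination_number_sierp_le (f : G -> H) (S : G -> {set H}) :
  (forall g h, h \in closed_nbh eH (S g)
                \/ exists g', [/\ eG g g', h = f g' & f g \in S g']) ->
  domination_number (sierp_rel eG eH f) <= \sum_g #|S g|.
Proof.
move=> coverS; set D := [set x : G * H | x.2 \in S x.1].
have layerD g : layer D g = S g by apply/setP => h; rewrite !inE.
have -> : \sum_g #|S g| = #|D| by rewrite card_layers; apply: eq_bigr => g _; rewrite layerD.
apply/domination_number_min/dominating_sierpP => g h; rewrite layerD.
by case: (coverS g h) => [|[g' cover]]; [left | right; exists g'; rewrite layerD].
Qed.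

Lemma upper_sierp_domE t (f0 : {ffun G -> H}) :
  (forall f : {ffun G -> H}, domination_number (sierp_rel eG eH f) <= t) ->
  (forall D, dominating (sierp_rel eG eH f0) D -> t <= #|D|) ->
  upper_sierp_dom eG eH = t.
Proof.
move=> le_t ge_t; apply/eqP; rewrite eqn_leq; apply/andP; split.
  by apply/bigmax_leqP => f _; apply: le_t.
exact: leq_trans (domination_number_max ge_t) (leq_bigmax f0).
Qed.

End SierpinskiLayers.

Lemma leq_card_in_nat (T : finType) (A : {pred T}) (f : T -> nat) N :
  {in A &, injective f} -> {in A, forall x, f x < N} -> #|A| <= N.
Proof.
move=> f_inj f_lt; rewrite cardE -(size_map f) -(size_iota 0 N).
apply: uniq_leq_size => [|y /mapP [x]].
  by rewrite map_inj_in_uniq ?enum_uniq // => x y; rewrite !mem_enum; exact: f_inj.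
by rewrite mem_enum => /f_lt x_lt ->; rewrite mem_iota.
Qed.

Lemma leq_sum_const (I : finType) (F : I -> nat) K :
  (forall i, F i <= K) -> \sum_i F i <= K * #|I|.
Proof. by move=> F_le; rewrite mulnC -sum_nat_const leq_sum. Qed.

Lemma leq_const_sum (I : finType) (F : I -> nat) K :
  (forall i, K <= F i) -> K * #|I| <= \sum_i F i.
Proof. by move=> F_ge; rewrite mulnC -sum_nat_const leq_sum. Qed.

Lemma sum_addn_mem (I : finType) (A : {set I}) k :
  \sum_i (k + (i \in A)) = k * #|I| + #|A|.
Proof.
rewrite big_split sum_nat_const mulnC; congr (_ + _).
by rewrite -sum1_card [RHS]big_mkcond; apply: eq_bigr => i _; case: (i \in A).
Qed.

Section Cycle.
Variable m : nat.
Implicit Types (x y : 'I_m) (S : {set 'I_m}).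

Lemma ordS_val x : (ordS x : nat) = if x.+1 == m then 0 else x.+1.
Proof.
have x_lt := ltn_ord x; rewrite /=; case: eqP => [-> | x_neq]; first by rewrite modnn.
by rewrite modn_small //; lia.
Qed.

Lemma ord_pred_val x : (ord_pred x : nat) = if x == 0 :> nat then m.-1 else x.-1.
Proof.
have x_lt := ltn_ord x; rewrite /=; case: eqP => [-> | x_neq0].
  by rewrite add0n modn_small //; lia.
have -> : (x + m).-1 = x.-1 + m by lia.
by rewrite modnDr modn_small //; lia.
Qed.

Lemma cycle_relE x y : cycle_rel m x y = (y == ordS x) || (x == ordS y).
Proof. by []. Qed.

Lemma cycle_rel_ordS x : cycle_rel m x (ordS x).
Proof. by rewrite cycle_relE eqxx. Qed.

Lemma cycle_rel_ord_pred x : cycle_rel m x (ord_pred x).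
Proof. by rewrite cycle_relE ord_predK eqxx orbT. Qed.

Lemma cycle_relP x y : cycle_rel m x y -> x = ord_pred y \/ x = ordS y.
Proof. by rewrite cycle_relE => /orP [/eqP -> | /eqP ->]; [left; rewrite ordSK | right]. Qed.

Lemma card_closed_nbh_cycle S : #|closed_nbh (cycle_rel m) S| <= 3 * #|S|.
Proof.
have nbhS : closed_nbh (cycle_rel m) S \subset S :|: @ord_pred m @: S :|: @ordS m @: S.
  apply/subsetP => x; rewrite !inE => /orP [-> // | /existsP [y /andP [yS]]].
  by case/cycle_relP => ->; rewrite imset_f ?orbT.
apply: leq_trans (subset_leq_card nbhS) _; rewrite mulSn mul2n -addnn addnA.
do 2 (apply: leq_trans (leq_card_setU _ _) _; apply: leq_add => //; last exact: leq_imset_card).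
Qed.

Lemma dominating_cycle_card S : dominating (cycle_rel m) S -> (m + 2) %/ 3 <= #|S|.
Proof.
move/dominatingP => domS; have := card_closed_nbh_cycle S.
have -> : closed_nbh (cycle_rel m) S = [set: 'I_m] by apply/setP => x; rewrite domS in_setT.
by rewrite cardsT card_ord; lia.
Qed.

End Cycle.

Section CycleDistance.
Variable m : nat.
Implicit Types (z h : 'I_m).

Definition fwd_dist z h : nat := if z <= h then h - z else h + m - z.

Local Ltac fwd_dist_lia :=
  rewrite /fwd_dist ?ordS_val ?ord_pred_val; repeat case: ifP; lia.

Lemma fwd_dist_lt z h : fwd_dist z h < m.
Proof. move: (ltn_ord z) (ltn_ord h); fwd_dist_lia. Qed.

Lemma fwd_dist_eq0 z h : (fwd_dist z h == 0) = (h == z).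
Proof.
rewrite -val_eqE /=; apply/eqP/eqP; move: (ltn_ord z) (ltn_ord h); fwd_dist_lia.
Qed.

Lemma fwd_distnn z : fwd_dist z z = 0.
Proof. by apply/eqP; rewrite fwd_dist_eq0. Qed.

Lemma fwd_dist_inj z : injective (fwd_dist z).
Proof.
move=> h h'; move: (ltn_ord z) (ltn_ord h) (ltn_ord h') => z_lt h_lt h'_lt.
by move=> eq_fwd_dist; apply/val_inj => /=; move: eq_fwd_dist; fwd_dist_lia.
Qed.

Lemma fwd_dist_ordS z h :
  fwd_dist z (ordS h) = if fwd_dist z h == m.-1 then 0 else (fwd_dist z h).+1.
Proof. move: (ltn_ord z) (ltn_ord h); fwd_dist_lia. Qed.

Lemma fwd_dist_ord_pred z h :
  fwd_dist z (ord_pred h) = if fwd_dist z h == 0 then m.-1 else (fwd_dist z h).-1.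
Proof. move: (ltn_ord z) (ltn_ord h); fwd_dist_lia. Qed.

Lemma fwd_dist_ordSl z h : fwd_dist (ordS z) h = fwd_dist z (ord_pred h).
Proof. move: (ltn_ord z) (ltn_ord h); fwd_dist_lia. Qed.

Lemma fwd_dist_ord_predl z h : fwd_dist (ord_pred z) h = fwd_dist z (ordS h).
Proof. move: (ltn_ord z) (ltn_ord h); fwd_dist_lia. Qed.

End CycleDistance.

Section SpacedArc.
Variables (m k : nat).
Implicit Types (z h : 'I_m).

(* The vertices z + 2, z + 5, ..., z + 3k - 1: their closed neighbourhoods tile
   the arc z + 1, ..., z + 3k. *)
Definition spaced_arc z : {set 'I_m} :=
  [set h | (fwd_dist z h %% 3 == 2) && (fwd_dist z h < 3 * k)].

Lemma card_spaced_arc z : #|spaced_arc z| <= k.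
Proof.
apply: (@leq_card_in_nat _ _ (fun h => fwd_dist z h %/ 3)) => [h h'|h].
  rewrite !inE => /andP [/eqP h2 _] /andP [/eqP h'2 _] eq_div.
  by apply: (@fwd_dist_inj _ z); rewrite (divn_eq (fwd_dist z h) 3) (divn_eq (fwd_dist z h') 3) h2 h'2 eq_div.
by rewrite inE => /andP [_]; lia.
Qed.

Lemma spaced_arc_covers z h : 3 * k <= m -> 0 < fwd_dist z h <= 3 * k ->
  h \in closed_nbh (cycle_rel m) (spaced_arc z).
Proof.
move=> km dzh; have dzh_lt := fwd_dist_lt z h.
case: (ltngtP (fwd_dist z h %% 3) 1) => [d0 | d2 | d1].
- apply: (mem_closed_nbh (y := ord_pred h)); last by rewrite cycle_rel_ord_pred orbT.
  by rewrite inE fwd_dist_ord_pred; case: ifP; lia.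
- by apply: (mem_closed_nbh (y := h)); rewrite ?eqxx // inE; lia.
- apply: (mem_closed_nbh (y := ordS h)); last by rewrite cycle_rel_ordS orbT.
  by rewrite inE fwd_dist_ordS; case: ifP; lia.
Qed.

Lemma dominating_spaced_arc z : m = 3 * k -> dominating (cycle_rel m) (spaced_arc z).
Proof.
move=> mE; apply/dominatingP => h; have := fwd_dist_lt z h.
case: (posnP (fwd_dist z h)) => [/eqP | dzh_gt0 dzh_lt]; last by apply: spaced_arc_covers; lia.
rewrite fwd_dist_eq0 => /eqP -> _; have z_lt := ltn_ord z.
apply: (mem_closed_nbh (y := ord_pred z)); last by rewrite cycle_rel_ord_pred orbT.
by rewrite inE fwd_dist_ord_pred fwd_distnn /=; lia.
Qed.

Lemma dominating_spaced_arcU1 z :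
  m = 3 * k + 2 -> dominating (cycle_rel m) (z |: spaced_arc z).
Proof.
move=> mE; apply/dominatingP => h; have := fwd_dist_lt z h.
case: (posnP (fwd_dist z h)) => [/eqP | dzh_gt0 dzh_lt].
  by rewrite fwd_dist_eq0 => /eqP -> _; apply: (mem_closed_nbh (y := z)); rewrite ?setU11 ?eqxx.
have [dzh_last | dzh_le] := eqVneq (fwd_dist z h) m.-1.
  apply: (mem_closed_nbh (y := ordS h)); last by rewrite cycle_rel_ordS orbT.
  by apply/setU1P; left; apply/eqP; rewrite -fwd_dist_eq0 fwd_dist_ordS dzh_last eqxx.
apply: (subsetP (closed_nbhS _ (subsetUr _ _))).
by apply: spaced_arc_covers; lia.
Qed.

Lemma spaced_arc_covers_but z h :
  m = 3 * k + 1 -> h != z -> h \in closed_nbh (cycle_rel m) (spaced_arc z).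
Proof.
rewrite -fwd_dist_eq0 => mE dzh_neq0; have dzh_lt := fwd_dist_lt z h.
by apply: spaced_arc_covers; lia.
Qed.

End SpacedArc.

Section PairDominatingSet.
Variables (m k : nat).
Hypothesis mE : m = 3 * k + 1.
Implicit Types a b : 'I_m.

(* A vertex at distance at most one from a whose spaced arc contains b,
   unless b = a. *)
Definition arc_origin a b : 'I_m :=
  if fwd_dist a b %% 3 == 2 then a
  else if fwd_dist a b %% 3 == 0 then ordS a else ord_pred a.

Definition pair_dom a b : {set 'I_m} := a |: spaced_arc k (arc_origin a b).

Lemma card_pair_dom a b : #|pair_dom a b| <= k.+1.
Proof. by rewrite cardsU1 -add1n leq_add ?leq_b1 ?card_spaced_arc. Qed.

Lemma mem_pair_dom_r a b : b \in pair_dom a b.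
Proof.
have [-> | b_neq_a] := eqVneq b a; first exact: setU11.
apply/setU1P; right; rewrite inE /arc_origin -fwd_dist_eq0 in b_neq_a *.
have := fwd_dist_lt a b; case: ifP => d2; last case: ifP => d0;
  rewrite ?fwd_dist_ordSl ?fwd_dist_ord_predl ?fwd_dist_ord_pred ?fwd_dist_ordS; repeat case: ifP; lia.
Qed.

Lemma dominating_pair_dom a b : dominating (cycle_rel m) (pair_dom a b).
Proof.
apply/dominatingP => h; have [-> | h_neq] := eqVneq h (arc_origin a b).
  apply: (mem_closed_nbh (y := a)); first exact: setU11.
  by rewrite /arc_origin; case: ifP => _; [|case: ifP => _];
    rewrite ?eqxx // cycle_relE ?ord_predK eqxx ?orbT.
apply: (subsetP (closed_nbhS _ (subsetUr _ _))).
exact: spaced_arc_covers_but.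
Qed.

End PairDominatingSet.

Section Centres.
Variable n : nat.
Implicit Type g : 'I_n.

(* The vertices 1, 4, 7, ... together with n - 1 when n = 1 (mod 3): every vertex
   is a centre or adjacent to one. *)
Definition centres : {set 'I_n} :=
  [set g : 'I_n | (g %% 3 == 1) || (g.+1 == n) && (g %% 3 == 0)].

Lemma card_centres : #|centres| <= (n + 2) %/ 3.
Proof.
apply: (@leq_card_in_nat _ _ (fun g : 'I_n => g %/ 3)) => [g g' | g];
  rewrite !inE; have := ltn_ord g; last lia.
by have := ltn_ord g' => g'_lt g_lt g_centre g'_centre eq_div; apply/val_inj => /=; lia.
Qed.

Definition centre g : 'I_n := if g %% 3 == 0 then ordS g else ord_pred g.

Lemma centreP g : g \notin centres ->
  [/\ centre g \in centres, cycle_rel n g (centre g)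
    & g = ord_pred (centre g) \/ g = ordS (centre g)].
Proof.
rewrite /centre !inE => g_out; have := ltn_ord g.
case: ifP => g0 g_lt.
  by rewrite cycle_rel_ordS ordSK ordS_val; split; [case: ifP; lia | | left].
by rewrite cycle_rel_ord_pred ord_predK ord_pred_val; split; [case: ifP; lia | | right].
Qed.

End Centres.

Section SierpinskiCycles.
Variables (n m k : nat).
Notation sierp f := (sierp_rel (cycle_rel n) (cycle_rel m) f).

Lemma sierp_cycle_dom_le_3k (f : {ffun 'I_n -> 'I_m}) :
  m = 3 * k -> domination_number (sierp f) <= k * n.
Proof.
move=> mE; apply: leq_trans (domination_number_sierp_le (S := spaced_arc k \o f) _) _.
  by move=> g h; left; apply/dominatingP/dominating_spaced_arc.
by apply: leq_trans (leq_sum_const (K := k) _) _; rewrite ?card_ord // => g; exact: card_spaced_arc.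
Qed.

Lemma sierp_cycle_dom_le_3k2 (f : {ffun 'I_n -> 'I_m}) :
  m = 3 * k + 2 -> domination_number (sierp f) <= k.+1 * n.
Proof.
move=> mE; apply: leq_trans (domination_number_sierp_le (S := fun g => f g |: spaced_arc k (f g)) _) _.
  by move=> g h; left; apply/dominatingP/dominating_spaced_arcU1.
apply: leq_trans (leq_sum_const (K := k.+1) _) _; rewrite ?card_ord // => g.
by rewrite cardsU1 -add1n leq_add ?leq_b1 ?card_spaced_arc.
Qed.

Lemma sierp_cycle_dom_le_3k1 (f : {ffun 'I_n -> 'I_m}) :
  m = 3 * k + 1 -> domination_number (sierp f) <= k * n + (n + 2) %/ 3.
Proof.
move=> mE; pose S g := if g \in centres n then pair_dom k (f (ord_pred g)) (f (ordS g))
                       else spaced_arc k (f (centre g)).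
apply: leq_trans (domination_number_sierp_le (S := S) _) _.
  move=> g h; rewrite /S; case: ifP => g_centre.
    by left; apply/dominatingP/dominating_pair_dom.
  have [-> | h_neq] := eqVneq h (f (centre g)); last by left; apply: spaced_arc_covers_but.
  have [c_centre g_c g_pred_succ] := centreP (negbT g_centre).
  right; exists (centre g); split=> //; rewrite c_centre.
  by case: g_pred_succ => {1}->; [exact: setU11 | exact: mem_pair_dom_r].
apply: (@leq_trans (\sum_g (k + (g \in centres n)))).
  apply: leq_sum => g _; rewrite /S; case: ifP => _.
    by rewrite addn1 card_pair_dom.
  by rewrite addn0 card_spaced_arc.
by rewrite sum_addn_mem card_ord leq_add2l card_centres.
Qed.

Section ConstantMap.
Variables (c : 'I_m) (D : {set 'I_n * 'I_m}).
Hypothesis domD : dominating (sierp [ffun=> c]) D.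

Lemma card_layer_const g : m.-1 <= 3 * #|layer D g|.
Proof.
apply: leq_trans (card_closed_nbh_cycle _); have := cardsC1 c; rewrite card_ord => <-.
apply: subset_leq_card.
apply/subsetP => h; rewrite in_setC1 => h_neq_c.
by apply: (dominating_sierp_layer _ domD) => g'; rewrite ffunE.
Qed.

Lemma sierp_cycle_const_ge K : 3 * K <= m.+1 -> K * n <= #|D|.
Proof.
move=> K_le; rewrite card_layers; apply: leq_trans (leq_const_sum (K := K) _); rewrite ?card_ord // => g.
by have := card_layer_const g; lia.
Qed.

Lemma sierp_cycle_const_ge_3k1 : m = 3 * k + 1 -> k * n + (n + 2) %/ 3 <= #|D|.
Proof.
move=> mE; pose heavy := [set g | k < #|layer D g|].
have light_miss g : g \notin heavy -> c \notin closed_nbh (cycle_rel m) (layer D g).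
  rewrite inE -leqNgt => light; apply/negP => c_in.
  suff : (m + 2) %/ 3 <= #|layer D g| by lia.
  apply/dominating_cycle_card/dominatingP => h; have [-> // | h_neq_c] := eqVneq h c.
  by apply: (dominating_sierp_layer _ domD) => g'; rewrite ffunE.
have heavy_dom : dominating (cycle_rel n) heavy.
  apply/dominatingP => g; have [g_heavy | g_light] := boolP (g \in heavy).
    by apply: (mem_closed_nbh (y := g)); rewrite ?eqxx.
  have /dominating_sierpP/(_ g c) [c_in | [g' [g_g' _]]] := domD.
    by case/negP: (light_miss g g_light).
  rewrite ffunE => c_in; apply: (mem_closed_nbh (y := g')); last by rewrite g_g' orbT.
  by apply: contraT => /light_miss; rewrite (mem_closed_nbh c_in) ?eqxx.
apply: (@leq_trans (\sum_g (k + (g \in heavy)))).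
  by rewrite sum_addn_mem card_ord leq_add2l dominating_cycle_card.
rewrite card_layers leq_sum // => g _.
by have := card_layer_const g; rewrite inE; case: ltnP; lia.
Qed.

End ConstantMap.

End SierpinskiCycles.

Theorem theorem3p2 (n k p : nat) :
  3 <= n -> 1 <= k -> p <= 2 ->
  upper_sierp_dom (cycle_rel n) (cycle_rel (3 * k + p)) =
    (if p == 0 then k * n
     else if p == 1 then k * n + (n + 2) %/ 3
     else k.+1 * n).
Proof.
(* The argument does not use 3 <= n. *)
move=> _ k_gt0 p_le2; have m_gt0 : 0 < 3 * k + p by lia.
case: p p_le2 m_gt0 => [|[|[|//]]] _ m_gt0 /=;
  apply: (upper_sierp_domE (f0 := [ffun=> Ordinal m_gt0])) => [f | D domD].
- exact: sierp_cycle_dom_le_3k (addn0 _).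
- by apply: (sierp_cycle_const_ge domD); lia.
- exact: sierp_cycle_dom_le_3k1.
- exact: sierp_cycle_const_ge_3k1 domD _.
- exact: sierp_cycle_dom_le_3k2.
- by apply: (sierp_cycle_const_ge domD); lia.
Qed.
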